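(* Let $\hat\mu\in\mathbb{C}\setminus\{0\}$. If $(\hat\mu,\hat\phi)$ with $\hat\phi\in X\setminus\{0\}$ satisfies $\mathscr{U}\hat\phi=\hat\mu\hat\phi$, then $\mathcal{N}(\hat\mu)\hat{\bm v}=0$, where $\hat{\bm v}=(v_1^{\mathrm T}\,\cdots\,v_N^{\mathrm T})^{\mathrm T}\in\mathbb{C}^{Nd}$ is given by $v_n=x((n-1)\Delta;0,\hat\phi)$, $n=1,\ldots,N$. Conversely, if $\hat{\bm v}\in\mathbb{C}^{Nd}\setminus\{0\}$ satisfies $\mathcal{N}(\hat\mu)\hat{\bm v}=0$, then $\mathscr{U}\hat\phi=\hat\mu\hat\phi$, where \[ \hat\phi(t)=\hat\mu^{\lfloor (n-1)/N\rfloor}\,q_{((n-1)\bmod N)+1}\Big(\frac{t}{\Delta}-(n-1)\Big),\quad t\in((n-1)\Delta,n\Delta],\ n=-n_h+1,\ldots,0, \] and $\bm q(s)=(q_1^{\mathrm T}(s)\,\cdots\,q_N^{\mathrm T}(s))^{\mathrm T}$ is the solution of $\dot{\bm q}(s)=A(s,\hat\mu)\bm q(s)$, $s\in[0,1]$, $\bm q(0)=\hat{\bm v}$.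
   Context: Consider $\dot{x}(t)=\sum_{j=0}^h A_j(t)x(t-\tau_j)$ with $x(t)\in\mathbb{R}^d$, $A_j:\mathbb{R}\to\mathbb{R}^{d\times d}$ smooth and $T$-periodic ($T>0$), $0=\tau_0\le\tau_1<\cdots<\tau_h$, and $\Delta>0$, integers $N,n_j$ with $T=N\Delta$, $\tau_j=n_j\Delta$ ($n_0=0$). Let $X=C([-\tau_h,0],\mathbb{C}^d)$; $x(t;t_0,\phi)$ is the solution with initial function $\phi\in X$ at time $t_0$ (i.e. $x(t)=\phi(t-t_0)$ on $[t_0-\tau_h,t_0]$), and the monodromy operator is $\mathscr{U}\phi=x_T(\cdot;0,\phi)$, where $x_t(\theta;t_0,\phi)=x(t+\theta;t_0,\phi)$, $\theta\in[-\tau_h,0]$. For $\mu\neq0$ define the $Nd\times Nd$ matrix-valued function $A(s,\mu)$ by: for $\bm q=(q_1^{\mathrm T},\ldots,q_N^{\mathrm T})^{\mathrm T}$, the $n$-th block of $A(s,\mu)\bm q$ is $\Delta\sum_{j=0}^h A_j((s+n-1)\Delta)\mu^{a_{n-n_j}}q_{b_{n-n_j}}$, where $a_k=\lfloor (k-1)/N\rfloor$, $b_k=((k-1)\bmod N)+1$. Let $B(\mu)=\begin{pmatrix}0&I_{N-1}\\ \mu&0\end{pmatrix}\otimes I_d$. The characteristic matrix $\mathcal N(\mu)\in\mathbb{C}^{Nd\times Nd}$ is defined by $\mathcal N(\mu)\bm v=\bm q(1)-B(\mu)\bm v$, where $\bm q$ solves $\dot{\bm q}(s)=A(s,\mu)\bm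 q(s)$, $s\in[0,1]$, $\bm q(0)=\bm v$. *)

From Stdlib Require Import Reals ZArith.
From Coquelicot Require Import Coquelicot.
Open Scope R_scope.

(* Vectors of C^d are represented as functions nat -> C (components 0..d-1);
   vectors of C^{Nd} as block functions nat -> nat -> C (block 1..N, component 0..d-1). *)

Fixpoint csum (n : nat) (f : nat -> C) : C :=
  match n with
  | O => RtoC 0
  | S m => Cplus (csum m f) (f m)
  end.

Fixpoint cpow (z : C) (n : nat) : C :=
  match n with
  | O => RtoC 1
  | S m => Cmult z (cpow z m)
  end.

Definition czpow (z : C) (k : Z) : C :=
  if (0 <=? k)%Z then cpow z (Z.to_nat k) else Cinv (cpow z (Z.to_nat (- k))).

Definition a_idx (N : nat) (k : Z) : Z := ((k - 1) / Z.of_nat N)%Z.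
Definition b_idx (N : nat) (k : Z) : nat := S (Z.to_nat ((k - 1) mod Z.of_nat N)%Z).

Definition cont_on (a b : R) (f : R -> C) : Prop :=
  forall t, a <= t <= b ->
    filterlim f (within (fun s => a <= s <= b) (locally t)) (locally (f t)).

Definition cont_from (a : R) (f : R -> C) : Prop :=
  forall t, a <= t ->
    filterlim f (within (fun s => a <= s) (locally t)) (locally (f t)).

Definition smooth (f : R -> R) : Prop := forall m t, ex_derive_n f m t.

Definition in_X (d : nat) (tauh : R) (phi : R -> nat -> C) : Prop :=
  forall i, (i < d)%nat -> cont_on (- tauh) 0 (fun t => phi t i).

Definition nonzero_X (d : nat) (tauh : R) (phi : R -> nat -> C) : Prop :=
  exists t i, - tauh <= t <= 0 /\ (i < d)%nat /\ phi t i <> RtoC 0.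

Definition dde_sol (d h : nat) (n : nat -> nat) (Delta : R)
    (A : nat -> R -> nat -> nat -> R) (phi : R -> nat -> C) (x : R -> nat -> C) : Prop :=
  let tauh := INR (n h) * Delta in
  (forall i, (i < d)%nat -> forall t, - tauh <= t <= 0 -> x t i = phi t i) /\
  (forall i, (i < d)%nat -> cont_from (- tauh) (fun t => x t i)) /\
  (forall i, (i < d)%nat -> forall t, 0 < t ->
     is_derive (K := R_AbsRing) (V := C_R_NormedModule) (fun s => x s i) t
       (csum (S h) (fun j => csum d (fun k =>
          Cmult (RtoC (A j t i k)) (x (t - INR (n j) * Delta) k))))).

(** monodromy eigen-relation  U phi = mu phi, for the solution x = x(.;0,phi):
    x_T(theta) = x(T + theta) = mu phi(theta), theta in [-tau_h,0], T = N Delta *)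
Definition monodromy_eig (d N h : nat) (n : nat -> nat) (Delta : R)
    (mu : C) (phi : R -> nat -> C) (x : R -> nat -> C) : Prop :=
  forall i, (i < d)%nat -> forall theta, - (INR (n h) * Delta) <= theta <= 0 ->
    x (INR N * Delta + theta) i = Cmult mu (phi theta i).

Definition Amat_app (d N h : nat) (n : nat -> nat) (Delta : R)
    (A : nat -> R -> nat -> nat -> R) (s : R) (mu : C) (q : nat -> nat -> C)
    (nb i : nat) : C :=
  Cmult (RtoC Delta)
    (csum (S h) (fun j =>
       let k := (Z.of_nat nb - Z.of_nat (n j))%Z in
       csum d (fun l =>
         Cmult (RtoC (A j ((s + INR nb - 1) * Delta) i l))
               (Cmult (czpow mu (a_idx N k)) (q (b_idx N k) l))))).

Definition ode_sol (d N h : nat) (n : nat -> nat) (Delta : R)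
    (A : nat -> R -> nat -> nat -> R) (mu : C) (v : nat -> nat -> C)
    (q : R -> nat -> nat -> C) : Prop :=
  (forall nb i, (1 <= nb <= N)%nat -> (i < d)%nat -> q 0 nb i = v nb i) /\
  (forall nb i, (1 <= nb <= N)%nat -> (i < d)%nat -> cont_on 0 1 (fun s => q s nb i)) /\
  (forall nb i, (1 <= nb <= N)%nat -> (i < d)%nat -> forall s, 0 < s < 1 ->
     is_derive (K := R_AbsRing) (V := C_R_NormedModule) (fun r => q r nb i) s
       (Amat_app d N h n Delta A s mu (q s) nb i)).

Definition Bmat_app (N : nat) (mu : C) (v : nat -> nat -> C) (nb i : nat) : C :=
  if (nb <? N)%nat then v (S nb) i else Cmult mu (v 1%nat i).

(** N(mu) v = 0, i.e. q(1) - B(mu) v = 0 where q is the solution of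
    q' = A(s,mu) q, q(0) = v. *)
Definition charmat_kernel (d N h : nat) (n : nat -> nat) (Delta : R)
    (A : nat -> R -> nat -> nat -> R) (mu : C) (v : nat -> nat -> C) : Prop :=
  forall q, ode_sol d N h n Delta A mu v q ->
    forall nb i, (1 <= nb <= N)%nat -> (i < d)%nat -> q 1 nb i = Bmat_app N mu v nb i.

Definition nonzero_vec (d N : nat) (v : nat -> nat -> C) : Prop :=
  exists nb i, (1 <= nb <= N)%nat /\ (i < d)%nat /\ v nb i <> RtoC 0.

(** ceil(t / Delta) as an integer *)
Definition ceil_div (t Delta : R) : Z := (- Int_part (- (t / Delta)))%Z.

Definition phi_of_q (N : nat) (Delta : R) (mu : C) (q : R -> nat -> nat -> C)
    (t : R) (i : nat) : C :=
  let m := ceil_div t Delta in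
  Cmult (czpow mu (a_idx N m)) (q (t / Delta - (IZR m - 1)) (b_idx N m) i).

From Stdlib Require Import Reals ZArith Lia Lra List.
From Coquelicot Require Import Coquelicot.
Open Scope R_scope.

(* Let T = N Delta. If U phi = mu phi, then x(T + t) = mu x(t) on [-tau_h, oo), because
   both sides solve the delay equation with the same initial function. This quasi-periodicity
   folds every delayed value x((s + n - 1 - n_j) Delta) back into one of the blocks
   q_n(s) = x((s + n - 1) Delta), s in [0,1], so the blocks solve q' = A(s, mu) q, and
   x(T) = mu x(0), read blockwise, is q(1) = B(mu) q(0). Conversely, the blocks of a kernel
   vector, rescaled by powers of mu, glue to a continuous function on R with
   x(t + T) = mu x(t) that solves the delay equation off the grid Delta Z, which is enough
   for uniqueness. Uniqueness for linear retarded equations is proved by halving: if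
   |w'| <= L sup_past |w|, w vanishes up to c and L dl <= 1/4, then every bound on |w| over
   [c, c + dl] can be halved, so w vanishes there too. *)

Lemma csum_ext n f g : (forall j, (j < n)%nat -> f j = g j) -> csum n f = csum n g.
Proof.
  induction n as [|n IHn]; intros Hfg; cbn [csum]; auto.
  rewrite IHn, Hfg; auto.
Qed.

Lemma csum_minus n f g : Cminus (csum n f) (csum n g) = csum n (fun j => Cminus (f j) (g j)).
Proof. induction n as [|n IHn]; cbn [csum]; [ring|]. rewrite <- IHn. ring. Qed.

Lemma csum_mult_l n c f : Cmult c (csum n f) = csum n (fun j => Cmult c (f j)).
Proof. induction n as [|n IHn]; cbn [csum]; [ring|]. rewrite <- IHn. ring. Qed.

Lemma Cmod_csum_le n f M :
  (forall j, (j < n)%nat -> Cmod (f j) <= M) -> Cmod (csum n f) <= INR n * M.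
Proof.
  induction n as [|n IHn]; intros Hf; cbn [csum].
  - rewrite Cmod_0. simpl. lra.
  - rewrite S_INR. eapply Rle_trans; [apply Cmod_triangle|].
    assert (H1 := IHn (fun j Hj => Hf j ltac:(lia))). assert (H2 := Hf n ltac:(lia)). lra.
Qed.

Lemma czpow_succ mu k : mu <> RtoC 0 -> czpow mu (k + 1) = Cmult mu (czpow mu k).
Proof.
  intros Hmu. unfold czpow. destruct (Z.leb_spec 0 k) as [Hk|Hk].
  - rewrite (proj2 (Z.leb_le 0 (k + 1))) by lia.
    replace (Z.to_nat (k + 1)) with (S (Z.to_nat k)) by lia. reflexivity.
  - destruct (Z.eq_dec k (-1)) as [->|Hk1].
    + simpl. field. exact Hmu.
    + rewrite (proj2 (Z.leb_gt 0 (k + 1))) by lia.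
      replace (Z.to_nat (- k)) with (S (Z.to_nat (- (k + 1)))) by lia. simpl.
      field. split; [apply Cpow_nz|]; exact Hmu.
Qed.

Lemma Cminus_eq0 a b : Cminus a b = RtoC 0 -> a = b.
Proof. intros H. replace a with (Cplus (Cminus a b) b) by ring. rewrite H. ring. Qed.

(** * Calculus of complex-valued functions of a real variable *)

Lemma scal_R_C (a : R) (z : C) : @scal _ C_R_NormedModule a z = Cmult (RtoC a) z.
Proof.
  destruct z as [z1 z2]. unfold scal; simpl. unfold prod_scal, Cmult, RtoC; simpl.
  unfold scal; simpl. unfold mult; simpl. f_equal; ring.
Qed.

Lemma norm_C_R (z : C) : @norm _ C_R_NormedModule z = Cmod z.
Proof.
  unfold norm; simpl. unfold prod_norm, Cmod; simpl. unfold norm; simpl. unfold abs; simpl.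
  f_equal. rewrite !Rmult_1_r, <- !Rabs_mult, !Rabs_right; auto; apply Rle_ge, Rle_0_sqr.
Qed.

Lemma is_derive_Re (f : R -> C) t D :
  is_derive (K := R_AbsRing) (V := C_R_NormedModule) f t D ->
  is_derive (fun s => Re (f s)) t (Re D).
Proof.
  intros Hf. eapply filterdiff_ext_lin.
  - apply (filterdiff_comp' (U := R_NormedModule) (V := C_R_NormedModule)
      (W := R_NormedModule) f (fun z : C => fst z)); [exact Hf|].
    apply filterdiff_linear, (@is_linear_fst R_AbsRing R_NormedModule R_NormedModule).
  - reflexivity.
Qed.

Lemma is_derive_Im (f : R -> C) t D :
  is_derive (K := R_AbsRing) (V := C_R_NormedModule) f t D ->
  is_derive (fun s => Im (f s)) t (Im D).
Proof.
  intros Hf. eapply filterdiff_ext_lin.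
  - apply (filterdiff_comp' (U := R_NormedModule) (V := C_R_NormedModule)
      (W := R_NormedModule) f (fun z : C => snd z)); [exact Hf|].
    apply filterdiff_linear, (@is_linear_snd R_AbsRing R_NormedModule R_NormedModule).
  - reflexivity.
Qed.

Lemma is_derive_Cmult_l (f : R -> C) t D c :
  is_derive (K := R_AbsRing) (V := C_R_NormedModule) f t D ->
  is_derive (K := R_AbsRing) (V := C_R_NormedModule) (fun s => Cmult c (f s)) t (Cmult c D).
Proof.
  intros Hf. eapply filterdiff_ext_lin.
  - apply (filterdiff_comp' (U := R_NormedModule) (V := C_R_NormedModule)
      (W := C_R_NormedModule) f (fun z : C => Cmult c z)); [exact Hf|].
    apply filterdiff_linear. constructor.
    + intros u v. change (@eq C (Cmult c (Cplus u v)) (Cplus (Cmult c u) (Cmult c v))). ring.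
    + intros k u. rewrite !scal_R_C.
      change (@eq C (Cmult c (Cmult k u)) (Cmult k (Cmult c u))). ring.
    + exists (Cmod c + 1). split; [pose proof (Cmod_ge_0 c); lra|].
      intros u. rewrite !norm_C_R, Cmod_mult. pose proof (Cmod_ge_0 u). nra.
  - intros u. simpl. rewrite !scal_R_C.
    change (@eq C (Cmult c (Cmult u D)) (Cmult u (Cmult c D))). ring.
Qed.

Lemma is_derive_comp_affine (f : R -> C) al be t D :
  is_derive (K := R_AbsRing) (V := C_R_NormedModule) f (al * t + be) D ->
  is_derive (K := R_AbsRing) (V := C_R_NormedModule) (fun s => f (al * s + be)) t
    (Cmult (RtoC al) D).
Proof.
  intros Hf. rewrite <- scal_R_C. apply (is_derive_comp f (fun s => al * s + be)); [exact Hf|].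
  auto_derive; auto; ring.
Qed.

Lemma filterlim_Re {T} (F : (T -> Prop) -> Prop) {FF : Filter F} (g : T -> C) z :
  filterlim g F (locally z) -> filterlim (fun t => Re (g t)) F (locally (Re z)).
Proof.
  intros Hg. apply filterlim_locally. intros eps.
  eapply filter_imp; [|exact (proj1 (filterlim_locally g z) Hg eps)]. now intros x [H _].
Qed.

Lemma filterlim_Im {T} (F : (T -> Prop) -> Prop) {FF : Filter F} (g : T -> C) z :
  filterlim g F (locally z) -> filterlim (fun t => Im (g t)) F (locally (Im z)).
Proof.
  intros Hg. apply filterlim_locally. intros eps.
  eapply filter_imp; [|exact (proj1 (filterlim_locally g z) Hg eps)]. now intros x [_ H].
Qed.

Lemma filterlim_Cmult_l {T} (F : (T -> Prop) -> Prop) {FF : Filter F} (f : T -> C) a c :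
  filterlim f F (locally a) -> filterlim (fun t => Cmult c (f t)) F (locally (Cmult c a)).
Proof.
  intros Hf. eapply filterlim_comp; [exact Hf|].
  apply (@filterlim_scal_r C_AbsRing C_NormedModule c a).
Qed.

Lemma filterlim_Cminus {T} (F : (T -> Prop) -> Prop) {FF : Filter F} (f g : T -> C) a b :
  filterlim f F (locally a) -> filterlim g F (locally b) ->
  filterlim (fun t => Cminus (f t) (g t)) F (locally (Cminus a b)).
Proof.
  intros Hf Hg.
  apply (filterlim_ext (fun t => @plus C_NormedModule (f t) (Cmult (-1) (g t)))).
  { intros t. change (@eq C (Cplus (f t) (Cmult (-1) (g t))) (Cminus (f t) (g t))). ring. }
  replace (Cminus a b) with (@plus C_NormedModule a (Cmult (-1) b))
    by (change (@eq C (Cplus a (Cmult (-1) b)) (Cminus a b)); ring).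
  apply (filterlim_comp_2 (G := locally a) (H := locally (Cmult (-1) b)) f
    (fun t => Cmult (-1) (g t)) (fun u v : C_NormedModule => @plus C_NormedModule u v)).
  - exact Hf.
  - now apply filterlim_Cmult_l.
  - apply (@filterlim_plus C_AbsRing C_NormedModule).
Qed.

Lemma filterlim_within_sub {T : UniformSpace} {U} (f : T -> U) (D D' : T -> Prop) x l :
  (forall y, D y -> D' y) ->
  filterlim f (within D' (locally x)) l -> filterlim f (within D (locally x)) l.
Proof.
  intros HD Hf P HP. specialize (Hf P HP). unfold filtermap, within in *.
  eapply filter_imp; [|exact Hf]. intros y H Dy. exact (H (HD y Dy)).
Qed.

Lemma filterlim_locally_within {T : UniformSpace} {U} (f : T -> U) (D : T -> Prop) x l :
  filterlim f (locally x) l -> filterlim f (within D (locally x)) l.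
Proof.
  intros Hf P HP. specialize (Hf P HP). unfold filtermap, within in *.
  eapply filter_imp; [|exact Hf]. auto.
Qed.

Lemma filterlim_comp_affine_within (f : R -> C) (al be x0 : R) (D D' : R -> Prop) :
  0 < al -> (forall x, D x -> D' (al * x + be)) ->
  filterlim f (within D' (locally (al * x0 + be))) (locally (f (al * x0 + be))) ->
  filterlim (fun x => f (al * x + be)) (within D (locally x0)) (locally (f (al * x0 + be))).
Proof.
  intros Hal HD Hf. eapply filterlim_comp; [|exact Hf].
  intros P [eps HP]. assert (He : 0 < eps / al) by (apply Rdiv_lt_0_compat; [apply cond_pos|auto]).
  exists (mkposreal _ He). intros y Hy Dy. apply HP; [|auto].
  change (Rabs (al * y + be - (al * x0 + be)) < eps). change (Rabs (y - x0) < eps / al) in Hy.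
  replace (al * y + be - (al * x0 + be)) with (al * (y - x0)) by ring.
  rewrite Rabs_mult, Rabs_right by lra.
  apply (Rmult_lt_compat_l al) in Hy; [|auto]. field_simplify in Hy; lra.
Qed.

Lemma filterlim_glue (g g1 g2 : R -> C) x0 lo hi :
  lo < x0 < hi ->
  (forall x, lo <= x <= x0 -> g x = g1 x) ->
  (forall x, x0 <= x <= hi -> g x = g2 x) ->
  filterlim g1 (within (fun x => lo <= x <= x0) (locally x0)) (locally (g x0)) ->
  filterlim g2 (within (fun x => x0 <= x <= hi) (locally x0)) (locally (g x0)) ->
  filterlim g (locally x0) (locally (g x0)).
Proof.
  intros Hx E1 E2 H1 H2. apply filterlim_locally. intros eps.
  apply (proj1 (filterlim_locally _ _)) with (eps := eps) in H1, H2.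
  unfold within in H1, H2.
  assert (H3 : locally x0 (fun x => lo < x < hi))
    by (apply locally_interval with lo hi; simpl; try lra; auto).
  generalize (filter_and _ _ H1 (filter_and _ _ H2 H3)).
  apply filter_imp. intros x [Ha [Hb Hc]]. destruct (Rle_lt_dec x x0).
  - rewrite (E1 x) by lra. apply Ha. lra.
  - rewrite (E2 x) by lra. apply Hb. lra.
Qed.

Definition clamp (lo hi x : R) : R := Rmax lo (Rmin hi x).

Lemma clamp_id lo hi x : lo <= x <= hi -> clamp lo hi x = x.
Proof. intros Hx. unfold clamp. rewrite Rmin_right, Rmax_right; lra. Qed.

Lemma continuity_pt_clamp (f : R -> R) lo hi x :
  lo <= x <= hi ->
  filterlim f (within (fun y => lo <= y <= hi) (locally x)) (locally (f x)) ->
  continuity_pt (fun y => f (clamp lo hi y)) x.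
Proof.
  intros Hx Hf. apply continuity_pt_filterlim. rewrite clamp_id by exact Hx.
  eapply filterlim_comp; [|exact Hf].
  intros P [eps HP]. exists eps. intros y Hy. apply HP.
  - change (Rabs (clamp lo hi y - x) < eps). change (Rabs (y - x) < eps) in Hy.
    unfold clamp, Rmax, Rmin in *.
    repeat destruct Rle_dec; unfold Rabs in *; repeat destruct Rcase_abs; lra.
  - unfold clamp, Rmax, Rmin. repeat destruct Rle_dec; lra.
Qed.

Lemma cont_on_Re a b (f : R -> C) x : cont_on a b f -> a <= x <= b ->
  filterlim (fun s => Re (f s)) (within (fun s => a <= s <= b) (locally x)) (locally (Re (f x))).
Proof. intros Hf Hx. apply filterlim_Re; [apply within_filter, locally_filter|]. now apply Hf. Qed.

Lemma cont_on_Im a b (f : R -> C) x : cont_on a b f -> a <= x <= b ->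
  filterlim (fun s => Im (f s)) (within (fun s => a <= s <= b) (locally x)) (locally (Im (f x))).
Proof. intros Hf Hx. apply filterlim_Im; [apply within_filter, locally_filter|]. now apply Hf. Qed.

Lemma Rabs_continuous_bounded (g : R -> R) a b :
  (forall x, a <= x <= b -> continuity_pt g x) ->
  exists M, forall x, a <= x <= b -> Rabs (g x) <= M.
Proof.
  intros Hg. destruct (Rle_lt_dec a b) as [Hab|Hab]; [|exists 0; intros; lra].
  destruct (continuity_ab_maj g a b Hab Hg) as [x1 [Hx1 _]].
  destruct (continuity_ab_min g a b Hab Hg) as [x2 [Hx2 _]].
  exists (Rabs (g x1) + Rabs (g x2)). intros x Hx.
  specialize (Hx1 x Hx). specialize (Hx2 x Hx).
  unfold Rabs; repeat destruct Rcase_abs; lra.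
Qed.

Lemma Cmod_le_2Rmax (z : C) : Cmod z <= 2 * Rmax (Rabs (Re z)) (Rabs (Im z)).
Proof.
  eapply Rle_trans; [apply Cmod_2Rmax|]. apply Rmult_le_compat_r.
  - eapply Rle_trans; [apply Rabs_pos|apply Rmax_l].
  - rewrite <- (sqrt_square 2) at 2 by lra. apply sqrt_le_1_alt. lra.
Qed.

Lemma cont_on_bounded (f : R -> C) a b : cont_on a b f ->
  exists M, forall s, a <= s <= b -> Cmod (f s) <= M.
Proof.
  intros Hf.
  destruct (Rabs_continuous_bounded (fun y => Re (f (clamp a b y))) a b) as [M1 H1].
  { intros x Hx. apply (continuity_pt_clamp (fun y => Re (f y))), cont_on_Re; auto. }
  destruct (Rabs_continuous_bounded (fun y => Im (f (clamp a b y))) a b) as [M2 H2].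
  { intros x Hx. apply (continuity_pt_clamp (fun y => Im (f y))), cont_on_Im; auto. }
  exists (2 * Rmax M1 M2). intros s Hs.
  specialize (H1 s Hs). specialize (H2 s Hs). simpl in H1, H2.
  rewrite clamp_id in H1, H2 by exact Hs.
  eapply Rle_trans; [apply Cmod_le_2Rmax|]. apply Rmult_le_compat_l; [lra|].
  apply Rmax_lub.
  - eapply Rle_trans; [exact H1|apply Rmax_l].
  - eapply Rle_trans; [exact H2|apply Rmax_r].
Qed.

Lemma cont_on_of_cont_from lo a b (f : R -> C) : lo <= a -> cont_from lo f -> cont_on a b f.
Proof.
  intros Hlo Hf t Ht. apply (filterlim_within_sub _ _ (fun s => lo <= s)); [intros; lra|].
  apply Hf. lra.
Qed.

Lemma cont_from_shift lo T (f : R -> C) :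
  0 <= T -> cont_from lo f -> cont_from lo (fun t => f (T + t)).
Proof.
  intros HT Hf t Ht.
  apply (filterlim_ext (fun s => f (1 * s + T))); [intros; f_equal; ring|].
  replace (T + t) with (1 * t + T) by ring.
  apply (filterlim_comp_affine_within f 1 T t _ (fun s => lo <= s)); [lra|intros; lra|].
  apply Hf. lra.
Qed.

Lemma Rabs_increment_le (f : R -> R) lo hi c s K :
  lo <= c -> c < s -> s <= hi ->
  (forall x, lo <= x <= hi ->
     filterlim f (within (fun y => lo <= y <= hi) (locally x)) (locally (f x))) ->
  (forall x, c < x < s -> exists D, is_derive f x D /\ Rabs D <= K) ->
  Rabs (f s - f c) <= K * (s - c).
Proof.
  intros Hc Hcs Hs Hf Hd.
  assert (HK : 0 <= K).
  { destruct (Hd ((c + s) / 2)) as [D [_ HD]]; [lra|]. pose proof (Rabs_pos D). lra. }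
  set (g := fun y => f (clamp lo hi y)).
  assert (Hg : forall x, c < x < s -> exists D, is_derive g x D /\ Rabs D <= K).
  { intros x Hx. destruct (Hd x Hx) as [D [HD HDK]]. exists D. split; [|exact HDK].
    apply is_derive_ext_loc with f; [|exact HD].
    apply locally_interval with c s; simpl; try lra.
    intros y Hy1 Hy2. unfold g. rewrite clamp_id; lra. }
  (* the derivative is replaced by 0 at the endpoints, where MVT_gen may land *)
  set (dg := fun x => if Rlt_dec c x then if Rlt_dec x s then Derive g x else 0 else 0).
  destruct (MVT_gen g c s dg) as [xi [Hxi E]].
  - rewrite Rmin_left, Rmax_right by lra. intros x Hx. unfold dg.
    destruct (Rlt_dec c x); [|lra]. destruct (Rlt_dec x s); [|lra].
    destruct (Hg x Hx) as [D [HD _]]. apply Derive_correct. exists D. exact HD.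
  - rewrite Rmin_left, Rmax_right by lra. intros x Hx.
    apply continuity_pt_clamp; [lra|]. apply Hf. lra.
  - unfold g in E. rewrite !clamp_id in E by lra.
    rewrite E, Rabs_mult, (Rabs_right (s - c)) by lra. apply Rmult_le_compat_r; [lra|].
    unfold dg. destruct (Rlt_dec c xi); [destruct (Rlt_dec xi s)|]; try (rewrite Rabs_R0; lra).
    destruct (Hg xi) as [D [HD HDK]]; [lra|]. rewrite (is_derive_unique g xi D HD). exact HDK.
Qed.

Lemma Cmod_increment_le (f : R -> C) lo hi c s K :
  lo <= c -> c < s -> s <= hi -> cont_on lo hi f ->
  (forall x, c < x < s ->
     exists D, is_derive (K := R_AbsRing) (V := C_R_NormedModule) f x D /\ Cmod D <= K) ->
  Cmod (Cminus (f s) (f c)) <= 2 * K * (s - c).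
Proof.
  intros Hc Hcs Hs Hf Hd.
  assert (HRe : Rabs (Re (f s) - Re (f c)) <= K * (s - c)).
  { apply (Rabs_increment_le (fun y => Re (f y)) lo hi); auto.
    - intros x Hx. now apply cont_on_Re.
    - intros x Hx. destruct (Hd x Hx) as [D [HD HDK]]. exists (Re D).
      split; [now apply is_derive_Re|]. eapply Rle_trans; [apply re_le_Cmod|exact HDK]. }
  assert (HIm : Rabs (Im (f s) - Im (f c)) <= K * (s - c)).
  { apply (Rabs_increment_le (fun y => Im (f y)) lo hi); auto.
    - intros x Hx. now apply cont_on_Im.
    - intros x Hx. destruct (Hd x Hx) as [D [HD HDK]]. exists (Im D).
      split; [now apply is_derive_Im|]. eapply Rle_trans; [|exact HDK].
      eapply Rle_trans; [apply Rmax_r|apply Rmax_Cmod]. }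
  eapply Rle_trans; [apply Cmod_le_2Rmax|]. rewrite Rmult_assoc. apply Rmult_le_compat_l; [lra|].
  now apply Rmax_lub.
Qed.

(** * Uniqueness for retarded equations *)

Lemma list_uniform_bound {I : Type} (Q : I -> R -> Prop) (ks : list I) :
  (forall k M M', M <= M' -> Q k M -> Q k M') ->
  (forall k, In k ks -> exists M, Q k M) ->
  exists M, 0 <= M /\ forall k, In k ks -> Q k M.
Proof.
  intros Hmono. induction ks as [|k0 ks IH]; intros HQ.
  - exists 0. split; [lra|]. intros k [].
  - destruct IH as [M [HM HMQ]]; [intros k Hk; apply HQ; now right|].
    destruct (HQ k0 (or_introl eq_refl)) as [M0 HM0].
    exists (Rmax M M0). split; [eapply Rle_trans; [exact HM|apply Rmax_l]|].
    intros k [<-|Hk].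
    + eapply Hmono; [apply Rmax_r|exact HM0].
    + eapply Hmono; [apply Rmax_l|exact (HMQ k Hk)].
Qed.

Lemma Rle_div_pow2_eq0 x B : 0 <= x -> (forall p, x <= B / 2 ^ p) -> x = 0.
Proof.
  intros Hx H. destruct (Rle_lt_or_eq_dec 0 x Hx) as [Hpos|]; [exfalso|auto].
  destruct (Pow_x_infinity 2 ltac:(rewrite Rabs_right; lra) (B / x + 1)) as [p Hp].
  specialize (Hp p (le_n p)). specialize (H p).
  assert (H2p : 0 < 2 ^ p) by (apply pow_lt; lra).
  rewrite Rabs_right in Hp by lra.
  assert (HxB : x * 2 ^ p <= B).
  { apply (Rmult_le_compat_r (2 ^ p)) in H; [|lra].
    unfold Rdiv in H. rewrite Rmult_assoc, Rinv_l in H by lra. lra. }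
  assert (B + x <= x * 2 ^ p).
  { replace (B + x) with (x * (B / x + 1)) by (field; lra). apply Rmult_le_compat_l; lra. }
  lra.
Qed.

Lemma exists_fine_step L Delta : 0 < Delta ->
  exists M : nat, (0 < M)%nat /\ L * (Delta / INR M) <= 1 / 4.
Proof.
  intros HD. destruct (INR_unbounded (4 * L * Delta)) as [M HM].
  exists (S M). split; [lia|].
  assert (HM' : INR M < INR (S M)) by (apply lt_INR; lia).
  assert (HS : 0 < INR (S M)) by (apply lt_0_INR; lia).
  apply (Rmult_le_reg_r (INR (S M))); [exact HS|]. field_simplify; lra.
Qed.

Section RetardedUniqueness.

Variables (I : Type) (ks : list I) (w : I -> R -> C) (a b dl L : R).
Hypothesis dl_pos : 0 < dl.
Hypothesis L_ge0 : 0 <= L.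
Hypothesis L_dl : L * dl <= 1 / 4.
Hypothesis w_cont : forall k, In k ks -> cont_on a b (w k).
Hypothesis w_init : forall k, In k ks -> w k a = RtoC 0.
Hypothesis w_deriv : forall t, a < t < b -> (forall p : nat, t <> a + INR p * dl) ->
  forall k, In k ks ->
  exists D, is_derive (K := R_AbsRing) (V := C_R_NormedModule) (w k) t D /\
    forall B, 0 <= B -> (forall k' s, In k' ks -> a <= s <= t -> Cmod (w k' s) <= B) ->
    Cmod D <= L * B.

Lemma retarded_halving p B : 0 <= B ->
  (forall k s, In k ks -> a <= s <= b -> s <= a + INR p * dl -> w k s = RtoC 0) ->
  (forall k s, In k ks -> a <= s <= b -> s <= a + INR (S p) * dl -> Cmod (w k s) <= B) ->
  forall k s, In k ks -> a <= s <= b -> s <= a + INR (S p) * dl -> Cmod (w k s) <= B / 2.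
Proof.
  intros HB Hzero Hbound k s Hk Hs Hsp.
  set (c := a + INR p * dl) in *.
  assert (Hc : a <= c) by (unfold c; pose proof (pos_INR p); nra).
  rewrite S_INR in Hsp. replace (a + (INR p + 1) * dl) with (c + dl) in Hsp by (unfold c; ring).
  destruct (Rle_lt_dec s c) as [Hsc|Hsc].
  { rewrite (Hzero k s Hk Hs Hsc), Cmod_0. lra. }
  replace (w k s) with (Cminus (w k s) (w k c)) by (rewrite (Hzero k c); auto; try ring; lra).
  eapply Rle_trans.
  - apply (Cmod_increment_le (w k) a b c s (L * B)); auto; try lra.
    intros x Hx. destruct (w_deriv x ltac:(lra)) with (k := k) as [D [HD HDB]]; auto.
    + intros p' E. assert (INR p < INR p' < INR p + 1).
      { split; apply (Rmult_lt_reg_r dl); auto; unfold c in *; lra. }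
      rewrite <- S_INR in H. destruct H as [H1 H2]. apply INR_lt in H1, H2. lia.
    + exists D. split; [exact HD|]. apply HDB; [exact HB|].
      intros k' s' Hk' Hs'. apply Hbound; auto; [lra|]. rewrite S_INR. unfold c in *; lra.
  - assert (L * (s - c) <= 1 / 4)
      by (apply Rle_trans with (L * dl); [apply Rmult_le_compat_l|]; lra).
    nra.
Qed.

Lemma retarded_vanish_step p :
  (forall k s, In k ks -> a <= s <= b -> s <= a + INR p * dl -> w k s = RtoC 0) ->
  forall k s, In k ks -> a <= s <= b -> s <= a + INR (S p) * dl -> w k s = RtoC 0.
Proof.
  intros Hzero.
  destruct (list_uniform_bound (fun k M => forall s, a <= s <= b -> Cmod (w k s) <= M) ks)
    as [B0 [HB0 HB0w]].
  { intros k M M' HM H s Hs. specialize (H s Hs). lra. }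
  { intros k Hk. apply cont_on_bounded, w_cont, Hk. }
  assert (Hhalf : forall q k s, In k ks -> a <= s <= b -> s <= a + INR (S p) * dl ->
            Cmod (w k s) <= B0 / 2 ^ q).
  { induction q as [|q IHq]; intros k s Hk Hs Hsp.
    - rewrite pow_O, Rdiv_1_r. now apply HB0w.
    - replace (B0 / 2 ^ S q) with (B0 / 2 ^ q / 2) by (simpl; field; apply pow_nonzero; lra).
      apply (retarded_halving p); auto.
      apply Rmult_le_pos; [exact HB0|]. left. apply Rinv_0_lt_compat, pow_lt. lra. }
  intros k s Hk Hs Hsp. apply Cmod_eq_0.
  apply (Rle_div_pow2_eq0 _ B0); [apply Cmod_ge_0|]. intros q. now apply Hhalf.
Qed.

Lemma retarded_vanish : forall k s, In k ks -> a <= s <= b -> w k s = RtoC 0.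
Proof.
  assert (Hp : forall p k s, In k ks -> a <= s <= b -> s <= a + INR p * dl -> w k s = RtoC 0).
  { induction p as [|p IHp]; intros k s Hk Hs Hsp.
    - replace s with a by (simpl in Hsp; lra). now apply w_init.
    - now apply (retarded_vanish_step p). }
  intros k s Hk Hs. destruct (INR_unbounded ((b - a) / dl)) as [p Hpb].
  apply (Hp p); auto. apply (Rmult_lt_compat_r dl) in Hpb; [|exact dl_pos].
  unfold Rdiv in Hpb. rewrite Rmult_assoc, Rinv_l in Hpb by lra. lra.
Qed.

End RetardedUniqueness.

(** * The delay equation and its block form *)

Lemma ab_idx_decomp N k : (0 < N)%nat ->
  k = (a_idx N k * Z.of_nat N + Z.of_nat (b_idx N k))%Z /\ (1 <= b_idx N k <= N)%nat.
Proof.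
  intros HN. unfold a_idx, b_idx.
  pose proof (Z.div_mod (k - 1) (Z.of_nat N) ltac:(lia)).
  pose proof (Z.mod_pos_bound (k - 1) (Z.of_nat N) ltac:(lia)). lia.
Qed.

Lemma ab_idx_unique N k p b : (0 < N)%nat -> (1 <= b <= N)%nat ->
  k = (p * Z.of_nat N + Z.of_nat b)%Z -> a_idx N k = p /\ b_idx N k = b.
Proof.
  intros HN Hb ->. unfold a_idx, b_idx.
  set (k := (p * Z.of_nat N + Z.of_nat b - 1)%Z).
  assert (Hq : p = (k / Z.of_nat N)%Z) by (apply Z.div_unique_pos with (Z.of_nat b - 1)%Z; lia).
  assert (Hr : (Z.of_nat b - 1 = k mod Z.of_nat N)%Z)
    by (apply Z.mod_unique_pos with p; lia).
  rewrite <- Hq, <- Hr. lia.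
Qed.

Lemma ab_idx_decomp_R N k : (0 < N)%nat ->
  IZR k = IZR (a_idx N k) * INR N + INR (b_idx N k).
Proof.
  intros HN. rewrite (proj1 (ab_idx_decomp N k HN)) at 1.
  rewrite plus_IZR, mult_IZR, <- !INR_IZR_INZ. ring.
Qed.

Lemma ceil_div_spec t D : IZR (ceil_div t D) - 1 < t / D <= IZR (ceil_div t D).
Proof. unfold ceil_div. rewrite opp_IZR. destruct (base_Int_part (- (t / D))). lra. Qed.

Lemma ceil_div_unique t D m : IZR m - 1 < t / D <= IZR m -> ceil_div t D = m.
Proof.
  intros Hm. unfold ceil_div.
  assert (Hspec : - (t / D) - 1 < IZR (- m) <= - (t / D)) by (rewrite opp_IZR; lra).
  rewrite <- (Int_part_spec _ _ Hspec). ring.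
Qed.

Definition dde_rhs (d h : nat) (n : nat -> nat) (Delta : R) (A : nat -> R -> nat -> nat -> R)
    (x : R -> nat -> C) (t : R) (i : nat) : C :=
  csum (S h) (fun j => csum d (fun k => Cmult (RtoC (A j t i k)) (x (t - INR (n j) * Delta) k))).

(* [phi_of_q] has corners at the multiples of [Delta], so the converse direction only
   produces solutions in this weaker sense. *)
Definition dde_sol_off_grid (d h : nat) (n : nat -> nat) (Delta : R)
    (A : nat -> R -> nat -> nat -> R) (x : R -> nat -> C) : Prop :=
  (forall i, (i < d)%nat -> cont_from (- (INR (n h) * Delta)) (fun t => x t i)) /\
  (forall i, (i < d)%nat -> forall t, 0 < t -> (forall p : nat, t <> INR p * Delta) ->
     is_derive (K := R_AbsRing) (V := C_R_NormedModule) (fun s => x s i) t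
       (dde_rhs d h n Delta A x t i)).

Lemma dde_rhs_minus d h n Delta A x1 x2 t i :
  Cminus (dde_rhs d h n Delta A x1 t i) (dde_rhs d h n Delta A x2 t i) =
  dde_rhs d h n Delta A (fun s k => Cminus (x1 s k) (x2 s k)) t i.
Proof.
  unfold dde_rhs. rewrite csum_minus. apply csum_ext. intros j _.
  rewrite csum_minus. apply csum_ext. intros k _. ring.
Qed.

Lemma dde_rhs_Cmult d h n Delta A c x t i :
  dde_rhs d h n Delta A (fun s k => Cmult c (x s k)) t i = Cmult c (dde_rhs d h n Delta A x t i).
Proof.
  unfold dde_rhs. rewrite csum_mult_l. apply csum_ext. intros j _.
  rewrite csum_mult_l. apply csum_ext. intros k _. ring.
Qed.

Lemma dde_rhs_bound d h n Delta A x t i LA B : 0 <= LA ->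
  (forall j k, (j <= h)%nat -> (k < d)%nat ->
     Rabs (A j t i k) <= LA /\ Cmod (x (t - INR (n j) * Delta) k) <= B) ->
  Cmod (dde_rhs d h n Delta A x t i) <= INR (S h) * (INR d * (LA * B)).
Proof.
  intros HLA H. apply Cmod_csum_le. intros j Hj. apply Cmod_csum_le. intros k Hk.
  destruct (H j k ltac:(lia) Hk) as [H1 H2]. rewrite Cmod_mult, Cmod_R.
  apply Rmult_le_compat; auto using Rabs_pos, Cmod_ge_0.
Qed.

Definition quasi_periodic (d : nat) (lo T : R) (mu : C) (y : R -> nat -> C) : Prop :=
  forall i, (i < d)%nat -> forall t, lo <= t -> y (T + t) i = Cmult mu (y t i).

Lemma quasi_periodic_Z d lo T mu y : 0 <= T -> mu <> RtoC 0 -> quasi_periodic d lo T mu y ->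
  forall i p t, (i < d)%nat -> lo <= t -> lo <= t + IZR p * T ->
  y (t + IZR p * T) i = Cmult (czpow mu p) (y t i).
Proof.
  intros HT Hmu Hy i p t Hi Ht Htp.
  assert (Hnat : forall (k : nat) s, lo <= s -> y (s + INR k * T) i = Cmult (cpow mu k) (y s i)).
  { induction k as [|k IH]; intros s Hs.
    - simpl. rewrite Rmult_0_l, Rplus_0_r. ring.
    - rewrite S_INR. replace (s + (INR k + 1) * T) with (T + (s + INR k * T)) by ring.
      rewrite Hy, IH; auto; [simpl; ring|]. pose proof (pos_INR k). nra. }
  unfold czpow. destruct (Z.leb_spec 0 p) as [Hp|Hp].
  - rewrite <- (Z2Nat.id p) at 1 by lia. rewrite <- INR_IZR_INZ. now apply Hnat.
  - set (p' := Z.to_nat (- p)).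
    assert (E : IZR p = - INR p')
      by (unfold p'; rewrite INR_IZR_INZ, Z2Nat.id, opp_IZR by lia; ring).
    pose proof (Hnat p' (t + IZR p * T) Htp) as Hback.
    replace (t + IZR p * T + INR p' * T) with t in Hback by (rewrite E; ring).
    rewrite Hback. field. now apply Cpow_nz.
Qed.

Lemma periodic_Z (f : R -> R) T : (forall t, f (t + T) = f t) ->
  forall p t, f (t + IZR p * T) = f t.
Proof.
  intros Hf.
  assert (Hnat : forall (p : nat) t, f (t + INR p * T) = f t).
  { induction p as [|p IH]; intros t; [simpl; now rewrite Rmult_0_l, Rplus_0_r|].
    rewrite S_INR. replace (t + (INR p + 1) * T) with ((t + INR p * T) + T) by ring.
    now rewrite Hf. }
  intros p t. destruct (Z_le_gt_dec 0 p).
  - rewrite <- (Z2Nat.id p) by lia. rewrite <- INR_IZR_INZ. apply Hnat.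
  - rewrite <- (Hnat (Z.to_nat (- p)) (t + IZR p * T)). f_equal.
    rewrite INR_IZR_INZ, Z2Nat.id, opp_IZR by lia. ring.
Qed.

Lemma Amat_app_minus d N h n Delta A s mu w1 w2 nb i :
  Cminus (Amat_app d N h n Delta A s mu w1 nb i) (Amat_app d N h n Delta A s mu w2 nb i) =
  Amat_app d N h n Delta A s mu (fun b l => Cminus (w1 b l) (w2 b l)) nb i.
Proof.
  unfold Amat_app. cbv zeta.
  match goal with |- Cminus (Cmult ?c ?x) (Cmult ?c ?y) = _ =>
    replace (Cminus (Cmult c x) (Cmult c y)) with (Cmult c (Cminus x y)) by ring end.
  f_equal. rewrite csum_minus. apply csum_ext. intros j _.
  rewrite csum_minus. apply csum_ext. intros k _. ring.
Qed.

Lemma Amat_app_bound (d N h : nat) (n : nat -> nat) (Delta : R) (A : nat -> R -> nat -> nat -> R)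
    (s : R) (mu : C) (w : nat -> nat -> C) (nb i : nat) (LA CZ B : R) :
  0 < Delta -> 0 <= LA -> 0 <= CZ ->
  (forall j l, (j <= h)%nat -> (l < d)%nat ->
     Rabs (A j ((s + INR nb - 1) * Delta) i l) <= LA /\
     Cmod (czpow mu (a_idx N (Z.of_nat nb - Z.of_nat (n j)))) <= CZ /\
     Cmod (w (b_idx N (Z.of_nat nb - Z.of_nat (n j))) l) <= B) ->
  Cmod (Amat_app d N h n Delta A s mu w nb i) <= Delta * (INR (S h) * (INR d * (LA * (CZ * B)))).
Proof.
  intros HD HLA HCZ H. unfold Amat_app. cbv zeta.
  rewrite Cmod_mult, Cmod_R, Rabs_right by lra. apply Rmult_le_compat_l; [lra|].
  apply Cmod_csum_le. intros j Hj. apply Cmod_csum_le. intros l Hl.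
  destruct (H j l ltac:(lia) Hl) as [H1 [H2 H3]]. rewrite !Cmod_mult, Cmod_R.
  apply Rmult_le_compat; auto using Rabs_pos, Cmod_ge_0.
  - apply Rmult_le_pos; apply Cmod_ge_0.
  - apply Rmult_le_compat; auto using Cmod_ge_0.
Qed.

Definition phi_piece (N : nat) (mu : C) (q : R -> nat -> nat -> C) (m : Z) (s : R) (i : nat) : C :=
  Cmult (czpow mu (a_idx N m)) (q s (b_idx N m) i).

Section DelayEquation.

Variables (d h : nat) (n : nat -> nat) (Delta : R) (A : nat -> R -> nat -> nat -> R).
Hypothesis Delta_pos : 0 < Delta.
Hypothesis n_le : forall j, (j <= h)%nat -> (n j <= n h)%nat.
Hypothesis A_cont : forall j i k t, (j <= h)%nat -> (i < d)%nat -> (k < d)%nat ->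
  continuity_pt (fun t => A j t i k) t.

Lemma delay_le_tauh j : (j <= h)%nat -> INR (n j) * Delta <= INR (n h) * Delta.
Proof. intros Hj. apply Rmult_le_compat_r; [lra|]. apply le_INR, n_le, Hj. Qed.

Lemma tauh_ge0 : 0 <= INR (n h) * Delta.
Proof. apply Rmult_le_pos; [apply pos_INR|lra]. Qed.

Lemma A_bounded lo hi : exists LA, 0 <= LA /\ forall j i k t,
  (j <= h)%nat -> (i < d)%nat -> (k < d)%nat -> lo <= t <= hi -> Rabs (A j t i k) <= LA.
Proof.
  destruct (list_uniform_bound
    (fun jik M => forall t, lo <= t <= hi ->
       Rabs (A (fst (fst jik)) t (snd (fst jik)) (snd jik)) <= M)
    (list_prod (list_prod (seq 0 (S h)) (seq 0 d)) (seq 0 d))) as [LA [HLA HA]].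
  - intros jik M M' HM H t Ht. specialize (H t Ht). lra.
  - intros [[j i] k] Hjik. rewrite !in_prod_iff, !in_seq in Hjik.
    apply Rabs_continuous_bounded. intros t _. simpl. apply A_cont; lia.
  - exists LA. split; [exact HLA|]. intros j i k t Hj Hi Hk Ht.
    apply (HA ((j, i), k)); [|exact Ht]. rewrite !in_prod_iff, !in_seq. lia.
Qed.

Lemma dde_sol_off_grid_of_dde_sol phi x :
  dde_sol d h n Delta A phi x -> dde_sol_off_grid d h n Delta A x.
Proof. intros [_ [Hc Hd]]. split; [exact Hc|]. intros i Hi t Ht _. exact (Hd i Hi t Ht). Qed.

Lemma dde_sol_off_grid_unique x1 x2 :
  dde_sol_off_grid d h n Delta A x1 -> dde_sol_off_grid d h n Delta A x2 ->
  (forall i, (i < d)%nat -> forall t, - (INR (n h) * Delta) <= t <= 0 -> x1 t i = x2 t i) ->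
  forall i, (i < d)%nat -> forall t, - (INR (n h) * Delta) <= t -> x1 t i = x2 t i.
Proof.
  intros [Hc1 Hd1] [Hc2 Hd2] Hinit i Hi t Ht.
  pose proof tauh_ge0.
  destruct (Rle_lt_dec t 0) as [Ht0|Ht0]; [now apply Hinit|].
  destruct (A_bounded 0 t) as [LA [HLA HA]].
  set (L := INR (S h) * (INR d * LA)).
  destruct (exists_fine_step L Delta Delta_pos) as [M [HM HLM]].
  apply Cminus_eq0.
  apply (retarded_vanish nat (seq 0 d) (fun k s => Cminus (x1 s k) (x2 s k)) 0 t (Delta / INR M) L);
    try (apply in_seq; lia); try lra.
  - apply Rdiv_lt_0_compat; [lra|]. apply lt_0_INR, HM.
  - unfold L. pose proof (pos_INR (S h)). pose proof (pos_INR d).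
    apply Rmult_le_pos; [|apply Rmult_le_pos]; lra.
  - intros k Hk. apply in_seq in Hk.
    assert (Hk' : (k < d)%nat) by lia.
    intros s Hs. apply filterlim_Cminus; [apply within_filter, locally_filter| |].
    + apply (cont_on_of_cont_from (- (INR (n h) * Delta))); [lra|apply Hc1, Hk'|exact Hs].
    + apply (cont_on_of_cont_from (- (INR (n h) * Delta))); [lra|apply Hc2, Hk'|exact Hs].
  - intros k Hk. apply in_seq in Hk. rewrite Hinit by (lia || lra). ring.
  - intros s Hs Hgrid k Hk. apply in_seq in Hk.
    assert (Hg : forall p : nat, s <> INR p * Delta).
    { intros p E. apply (Hgrid (p * M)%nat). rewrite E, mult_INR.
      field. apply not_0_INR. lia. }
    exists (Cminus (dde_rhs d h n Delta A x1 s k) (dde_rhs d h n Delta A x2 s k)). split.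
    + apply (is_derive_minus (fun r => x1 r k) (fun r => x2 r k));
        [apply Hd1|apply Hd2]; auto; (lia || lra).
    + intros B HB HBw. rewrite dde_rhs_minus.
      replace (L * B) with (INR (S h) * (INR d * (LA * B))) by (unfold L; ring).
      apply dde_rhs_bound; [exact HLA|].
      intros j l Hj Hl. split; [apply HA; (lia || lra)|].
      destruct (Rle_lt_dec 0 (s - INR (n j) * Delta)).
      * apply HBw; [apply in_seq; lia|]. pose proof (pos_INR (n j)). nra.
      * rewrite Hinit; [unfold Cminus; rewrite Cplus_opp_r, Cmod_0; exact HB|exact Hl|].
        pose proof (delay_le_tauh j Hj). lra.
Qed.

Section Periodic.

Variables (N : nat) (mu : C).
Hypothesis N_pos : (0 < N)%nat.
Hypothesis mu_neq0 : mu <> RtoC 0.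
Hypothesis A_periodic : forall j i k t, (j <= h)%nat -> (i < d)%nat -> (k < d)%nat ->
  A j (t + INR N * Delta) i k = A j t i k.

Lemma period_ge0 : 0 <= INR N * Delta.
Proof. pose proof (pos_INR N). nra. Qed.

Lemma ode_sol_unique v q1 q2 :
  ode_sol d N h n Delta A mu v q1 -> ode_sol d N h n Delta A mu v q2 ->
  forall nb i s, (1 <= nb <= N)%nat -> (i < d)%nat -> 0 <= s <= 1 -> q1 s nb i = q2 s nb i.
Proof.
  intros [H10 [H1c H1d]] [H20 [H2c H2d]] nb i s Hnb Hi Hs.
  destruct (A_bounded 0 (INR N * Delta)) as [LA [HLA HA]].
  destruct (list_uniform_bound
    (fun bj M => Cmod (czpow mu (a_idx N (Z.of_nat (fst bj) - Z.of_nat (n (snd bj))))) <= M)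
    (list_prod (seq 1 N) (seq 0 (S h)))) as [CZ [HCZ HCZb]].
  { intros bj M M' HM H. lra. }
  { intros bj _. eexists. apply Rle_refl. }
  set (L := Delta * (INR (S h) * (INR d * (LA * CZ)))).
  destruct (exists_fine_step L 1 Rlt_0_1) as [M [HM HLM]].
  set (ks := list_prod (seq 1 N) (seq 0 d)).
  assert (Hks : forall b l, In (b, l) ks <-> (1 <= b <= N)%nat /\ (l < d)%nat)
    by (intros b l; unfold ks; rewrite in_prod_iff, !in_seq; lia).
  apply Cminus_eq0.
  refine (retarded_vanish (nat * nat) ks
    (fun bl r => Cminus (q1 r (fst bl) (snd bl)) (q2 r (fst bl) (snd bl))) 0 1 (1 / INR M) L
    _ _ HLM _ _ _ (nb, i) s (proj2 (Hks nb i) (conj Hnb Hi)) Hs).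
  - apply Rdiv_lt_0_compat; [lra|]. apply lt_0_INR, HM.
  - unfold L. pose proof (pos_INR (S h)). pose proof (pos_INR d).
    repeat apply Rmult_le_pos; lra.
  - intros [b l] Hbl. apply Hks in Hbl. intros r Hr.
    apply filterlim_Cminus; [apply within_filter, locally_filter|apply H1c|apply H2c]; tauto.
  - intros [b l] Hbl. apply Hks in Hbl. simpl. rewrite H10, H20 by tauto. ring.
  - intros r Hr _ [b l] Hbl. apply Hks in Hbl. simpl.
    exists (Cminus (Amat_app d N h n Delta A r mu (q1 r) b l)
                   (Amat_app d N h n Delta A r mu (q2 r) b l)).
    split.
    + apply (is_derive_minus (fun u => q1 u b l) (fun u => q2 u b l)); [apply H1d|apply H2d]; tauto.
    + intros B HB HBw. rewrite Amat_app_minus.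
      replace (L * B) with (Delta * (INR (S h) * (INR d * (LA * (CZ * B))))) by (unfold L; ring).
      apply Amat_app_bound; auto. intros j l' Hj Hl'.
      destruct (ab_idx_decomp N (Z.of_nat b - Z.of_nat (n j)) N_pos) as [_ Hbr].
      split; [|split].
      * apply HA; try lia.
        assert (1 <= INR b <= INR N) by (split; [apply (le_INR 1)|apply le_INR]; lia). nra.
      * apply (HCZb (b, j)). rewrite in_prod_iff, !in_seq. lia.
      * apply (HBw (_, l')); [apply Hks; auto|lra].
Qed.

Lemma Amat_app_blocks (y : R -> nat -> C) (w : nat -> nat -> C) s nb i :
  quasi_periodic d (- (INR (n h) * Delta)) (INR N * Delta) mu y ->
  (forall b l, (1 <= b <= N)%nat -> (l < d)%nat -> w b l = y ((s + INR b - 1) * Delta) l) ->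
  0 <= s -> (1 <= nb)%nat ->
  Amat_app d N h n Delta A s mu w nb i =
  Cmult (RtoC Delta) (dde_rhs d h n Delta A y ((s + INR nb - 1) * Delta) i).
Proof.
  intros Hy Hw Hs Hnb. unfold Amat_app, dde_rhs. cbv zeta. f_equal.
  apply csum_ext. intros j Hj. apply csum_ext. intros l Hl. f_equal.
  set (k := (Z.of_nat nb - Z.of_nat (n j))%Z).
  destruct (ab_idx_decomp N k N_pos) as [_ Hb].
  assert (Hb1 : 1 <= INR (b_idx N k)) by (apply (le_INR 1); lia).
  assert (Hnb1 : 1 <= INR nb) by (apply (le_INR 1); lia).
  pose proof (delay_le_tauh j ltac:(lia)).
  assert (Hk : (s + INR nb - 1) * Delta - INR (n j) * Delta =
               (s + INR (b_idx N k) - 1) * Delta + IZR (a_idx N k) * (INR N * Delta)).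
  { assert (E : IZR k = INR nb - INR (n j)) by (unfold k; rewrite minus_IZR, <- !INR_IZR_INZ; ring).
    rewrite (ab_idx_decomp_R N k N_pos) in E.
    replace (INR nb) with (IZR (a_idx N k) * INR N + INR (b_idx N k) + INR (n j)) by lra. ring. }
  assert (Hpos : forall b, 1 <= b -> 0 <= (s + b - 1) * Delta) by (intros; apply Rmult_le_pos; lra).
  pose proof (Hpos _ Hb1). pose proof (Hpos _ Hnb1). pose proof tauh_ge0.
  rewrite Hw, Hk by auto. symmetry.
  apply (quasi_periodic_Z d (- (INR (n h) * Delta))); auto using period_ge0; [|rewrite <- Hk]; lra.
Qed.

Lemma dde_rhs_quasi_periodic (y : R -> nat -> C) p t i :
  quasi_periodic d (- (INR (n h) * Delta)) (INR N * Delta) mu y -> (i < d)%nat ->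
  0 <= t -> 0 <= t + IZR p * (INR N * Delta) ->
  dde_rhs d h n Delta A y (t + IZR p * (INR N * Delta)) i =
  Cmult (czpow mu p) (dde_rhs d h n Delta A y t i).
Proof.
  intros Hy Hi Ht Htp. unfold dde_rhs. rewrite csum_mult_l. apply csum_ext. intros j Hj.
  rewrite csum_mult_l. apply csum_ext. intros l Hl.
  pose proof (delay_le_tauh j ltac:(lia)).
  assert (HA : A j (t + IZR p * (INR N * Delta)) i l = A j t i l)
    by (apply (periodic_Z (fun u => A j u i l)); intros; apply A_periodic; lia).
  rewrite HA.
  replace (t + IZR p * (INR N * Delta) - INR (n j) * Delta)
    with (t - INR (n j) * Delta + IZR p * (INR N * Delta)) by ring.
  rewrite (quasi_periodic_Z d (- (INR (n h) * Delta)) _ mu y period_ge0 mu_neq0 Hy l p);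
    [ring|exact Hl|lra|lra].
Qed.

(** * From an eigenfunction of the monodromy operator to a kernel vector *)

Lemma dde_sol_quasi_periodic phi x :
  dde_sol d h n Delta A phi x -> monodromy_eig d N h n Delta mu phi x ->
  quasi_periodic d (- (INR (n h) * Delta)) (INR N * Delta) mu x.
Proof.
  intros Hx Hmon. pose proof Hx as [Hx0 [Hxc Hxd]]. pose proof period_ge0 as HT.
  intros i Hi t Ht.
  apply (dde_sol_off_grid_unique (fun t i => x (INR N * Delta + t) i)
    (fun t i => Cmult mu (x t i)));
    [split|split| |exact Hi|exact Ht].
  - intros l Hl. apply (cont_from_shift _ _ (fun t => x t l)); [exact HT|apply Hxc, Hl].
  - intros l Hl s Hs _.
    apply (is_derive_ext (fun r => x (1 * r + INR N * Delta) l)); [intros; f_equal; ring|].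
    replace (dde_rhs d h n Delta A (fun t i => x (INR N * Delta + t) i) s l)
      with (Cmult (RtoC 1) (dde_rhs d h n Delta A x (1 * s + INR N * Delta) l)).
    + apply (is_derive_comp_affine (fun u => x u l) 1 (INR N * Delta)).
      apply (Hxd l Hl). lra.
    + unfold dde_rhs. rewrite Cmult_1_l. apply csum_ext. intros j Hj. apply csum_ext. intros k Hk.
      rewrite Rmult_1_l, A_periodic by lia. do 2 f_equal. ring.
  - intros l Hl s Hs. apply filterlim_Cmult_l; [apply within_filter, locally_filter|].
    now apply Hxc.
  - intros l Hl s Hs _. rewrite dde_rhs_Cmult. apply is_derive_Cmult_l, Hxd; [exact Hl|exact Hs].
  - intros l Hl s Hs. rewrite Hmon, Hx0; [reflexivity|exact Hl|exact Hs|exact Hl|exact Hs].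
Qed.

Lemma dde_sol_blocks_ode_sol phi x :
  dde_sol d h n Delta A phi x ->
  quasi_periodic d (- (INR (n h) * Delta)) (INR N * Delta) mu x ->
  ode_sol d N h n Delta A mu (fun nb i => x ((INR nb - 1) * Delta) i)
    (fun s nb i => x ((s + INR nb - 1) * Delta) i).
Proof.
  intros [_ [Hxc Hxd]] Hper. pose proof tauh_ge0.
  split; [|split].
  - intros nb i _ _. f_equal. ring.
  - intros nb i Hnb Hi s Hs.
    assert (Hnb1 : 1 <= INR nb) by (apply (le_INR 1); lia).
    apply (filterlim_ext (fun r => x (Delta * r + (INR nb - 1) * Delta) i));
      [intros; f_equal; ring|].
    replace ((s + INR nb - 1) * Delta) with (Delta * s + (INR nb - 1) * Delta) by ring.
    apply (filterlim_comp_affine_within (fun u => x u i) _ _ _ _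
      (fun u => - (INR (n h) * Delta) <= u));
      [exact Delta_pos| |apply (Hxc i Hi)]; intros; nra.
  - intros nb i Hnb Hi s Hs.
    assert (Hnb1 : 1 <= INR nb) by (apply (le_INR 1); lia).
    rewrite (Amat_app_blocks x); [|exact Hper|reflexivity|lra|lia].
    apply (is_derive_ext (fun r => x (Delta * r + (INR nb - 1) * Delta) i));
      [intros; f_equal; ring|].
    apply (is_derive_comp_affine (fun u => x u i) Delta ((INR nb - 1) * Delta)).
    replace (Delta * s + (INR nb - 1) * Delta) with ((s + INR nb - 1) * Delta) by ring.
    apply (Hxd i Hi). apply Rmult_lt_0_compat; lra.
Qed.

Lemma monodromy_eig_charmat_kernel phi x :
  dde_sol d h n Delta A phi x -> monodromy_eig d N h n Delta mu phi x ->
  charmat_kernel d N h n Delta A mu (fun nb i => x ((INR nb - 1) * Delta) i).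
Proof.
  intros Hx Hmon. pose proof (dde_sol_quasi_periodic phi x Hx Hmon) as Hper.
  intros q Hq nb i Hnb Hi.
  rewrite (ode_sol_unique _ q _ Hq (dde_sol_blocks_ode_sol phi x Hx Hper) nb i 1 Hnb Hi)
    by lra.
  unfold Bmat_app. destruct (Nat.ltb_spec nb N).
  - rewrite S_INR. f_equal. ring.
  - replace nb with N by lia. pose proof tauh_ge0.
    replace ((1 + INR N - 1) * Delta) with (INR N * Delta + 0) by ring.
    rewrite (Hper i Hi 0) by lra. simpl. do 2 f_equal. ring.
Qed.

(** * From a kernel vector to an eigenfunction of the monodromy operator *)

Section Eigenvector.

Variables (v : nat -> nat -> C) (q : R -> nat -> nat -> C).
Hypothesis q_sol : ode_sol d N h n Delta A mu v q.
Hypothesis q_jump : forall nb i, (1 <= nb <= N)%nat -> (i < d)%nat ->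
  q 1 nb i = Bmat_app N mu v nb i.

Local Notation phi := (phi_of_q N Delta mu q).
Local Notation piece := (phi_piece N mu q).

(* [q 1 = B(mu) v] is exactly the condition that consecutive pieces of [phi] match. *)
Lemma phi_piece_jump m i : (i < d)%nat -> piece (m - 1) 1 i = piece m 0 i.
Proof.
  intros Hi. destruct q_sol as [Hq0 _]. unfold phi_piece.
  destruct (ab_idx_decomp N (m - 1) N_pos) as [Hm Hb].
  set (a := a_idx N (m - 1)) in *. set (b := b_idx N (m - 1)) in *.
  rewrite q_jump by auto. unfold Bmat_app. destruct (Nat.ltb_spec b N) as [HbN|HbN].
  - destruct (ab_idx_unique N m a (S b) N_pos ltac:(lia) ltac:(lia)) as [-> ->].
    rewrite Hq0 by (auto; lia). reflexivity.
  - destruct (ab_idx_unique N m (a + 1) 1 N_pos ltac:(lia) ltac:(lia)) as [-> ->].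
    rewrite Hq0 by (auto; lia). rewrite czpow_succ by exact mu_neq0. ring.
Qed.

Lemma phi_of_q_piece t m i : (i < d)%nat -> IZR m - 1 <= t / Delta <= IZR m ->
  phi t i = piece m (t / Delta - (IZR m - 1)) i.
Proof.
  intros Hi Hm. change (phi t i) with
    (piece (ceil_div t Delta) (t / Delta - (IZR (ceil_div t Delta) - 1)) i).
  destruct (Req_dec (t / Delta) (IZR m - 1)) as [E|E].
  - rewrite (ceil_div_unique t Delta (m - 1)) by (rewrite minus_IZR; lra).
    rewrite E, minus_IZR.
    replace (IZR m - 1 - (IZR m - 1 - 1)) with 1 by ring.
    replace (IZR m - 1 - (IZR m - 1)) with 0 by ring.
    now apply phi_piece_jump.
  - now rewrite (ceil_div_unique t Delta m) by lra.
Qed.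

Lemma phi_of_q_cont_within m i lo hi t0 : (i < d)%nat ->
  (IZR m - 1) * Delta <= lo -> hi <= IZR m * Delta -> lo <= t0 <= hi ->
  filterlim (fun t => phi t i) (within (fun t => lo <= t <= hi) (locally t0)) (locally (phi t0 i)).
Proof.
  intros Hi Hlo Hhi Ht0. destruct q_sol as [_ [Hqc _]].
  assert (Hcell : forall t, lo <= t <= hi -> IZR m - 1 <= t / Delta <= IZR m)
    by (intros t Ht; rewrite <- Rle_div_r, Rle_div_l by lra; lra).
  apply (filterlim_within_ext _ (fun t => piece m (/ Delta * t + - (IZR m - 1)) i)).
  { intros t Ht. rewrite (phi_of_q_piece t m) by auto. f_equal. field. lra. }
  rewrite (phi_of_q_piece t0 m) by auto.
  replace (t0 / Delta - (IZR m - 1)) with (/ Delta * t0 + - (IZR m - 1)) by (field; lra).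
  apply (filterlim_comp_affine_within (fun s => piece m s i) _ _ _ _ (fun s => 0 <= s <= 1)).
  - apply Rinv_0_lt_compat, Delta_pos.
  - intros t Ht. specialize (Hcell t Ht). unfold Rdiv in Hcell. lra.
  - unfold phi_piece. apply filterlim_Cmult_l; [apply within_filter, locally_filter|].
    destruct (ab_idx_decomp N m N_pos) as [_ Hb]. apply Hqc; [exact Hb|exact Hi|].
    specialize (Hcell t0 Ht0). unfold Rdiv in Hcell. lra.
Qed.

Lemma phi_of_q_continuous i t : (i < d)%nat ->
  filterlim (fun s => phi s i) (locally t) (locally (phi t i)).
Proof.
  intros Hi. pose proof (ceil_div_spec t Delta) as Hc. pose proof (base_Int_part (t / Delta)) as Hf.
  set (m := ceil_div t Delta) in *. set (m' := (Int_part (t / Delta) + 1)%Z).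
  assert (Hm' : IZR m' - 1 <= t / Delta < IZR m') by (unfold m'; rewrite plus_IZR; lra).
  assert ((IZR m - 1) * Delta < t) by (apply Rlt_div_r; lra).
  assert (t <= IZR m * Delta) by (apply Rle_div_l; lra).
  assert ((IZR m' - 1) * Delta <= t) by (apply Rle_div_r; lra).
  assert (t < IZR m' * Delta) by (apply Rlt_div_l; lra).
  apply (filterlim_glue (fun s => phi s i) (fun s => phi s i) (fun s => phi s i) t
    ((IZR m - 1) * Delta) (IZR m' * Delta)); [lra|easy|easy| |].
  - apply (phi_of_q_cont_within m); auto; lra.
  - apply (phi_of_q_cont_within m'); auto; lra.
Qed.

Lemma phi_of_q_quasi_periodic : quasi_periodic d (- (INR (n h) * Delta)) (INR N * Delta) mu phi.
Proof.
  intros i Hi t _. pose proof (ceil_div_spec t Delta) as Hm. set (m := ceil_div t Delta) in *.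
  assert (E : (INR N * Delta + t) / Delta = t / Delta + INR N) by (field; lra).
  rewrite (phi_of_q_piece (INR N * Delta + t) (m + Z.of_nat N))
    by (auto; rewrite plus_IZR, <- INR_IZR_INZ; lra).
  rewrite (phi_of_q_piece t m) by (auto; lra).
  unfold phi_piece. destruct (ab_idx_decomp N m N_pos) as [Hdec Hb].
  destruct (ab_idx_unique N (m + Z.of_nat N) (a_idx N m + 1) (b_idx N m) N_pos Hb ltac:(lia))
    as [-> ->].
  rewrite czpow_succ by exact mu_neq0. rewrite E, plus_IZR, <- INR_IZR_INZ.
  replace (t / Delta + INR N - (IZR m + INR N - 1)) with (t / Delta - (IZR m - 1)) by ring. ring.
Qed.

Lemma phi_of_q_blocks s b l : 0 <= s <= 1 -> (1 <= b <= N)%nat -> (l < d)%nat ->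
  q s b l = phi ((s + INR b - 1) * Delta) l.
Proof.
  intros Hs Hb Hl.
  assert (E : (s + INR b - 1) * Delta / Delta = s + INR b - 1) by (field; lra).
  rewrite (phi_of_q_piece _ (Z.of_nat b)) by (auto; rewrite <- INR_IZR_INZ, E; lra).
  unfold phi_piece. destruct (ab_idx_unique N (Z.of_nat b) 0 b N_pos Hb ltac:(lia)) as [-> ->].
  rewrite <- INR_IZR_INZ, E. replace (s + INR b - 1 - (INR b - 1)) with s by ring.
  unfold czpow. simpl. ring.
Qed.

Lemma phi_of_q_derive i t : (i < d)%nat -> 0 < t -> (forall p : nat, t <> INR p * Delta) ->
  is_derive (K := R_AbsRing) (V := C_R_NormedModule) (fun u => phi u i) t
    (dde_rhs d h n Delta A phi t i).
Proof.
  intros Hi Ht Hgrid. destruct q_sol as [_ [_ Hqd]].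
  pose proof (ceil_div_spec t Delta) as Hm. set (m := ceil_div t Delta) in *.
  assert (Hlt : t / Delta < IZR m).
  { destruct (Rlt_le_dec (t / Delta) (IZR m)) as [H|H]; [exact H|exfalso].
    assert (0 < t / Delta) by (apply Rdiv_lt_0_compat; lra).
    assert (Hm0 : (0 < m)%Z) by (apply lt_IZR; lra).
    apply (Hgrid (Z.to_nat m)). rewrite INR_IZR_INZ, Z2Nat.id by lia.
    replace (IZR m) with (t / Delta) by lra. field. lra. }
  set (s := t / Delta - (IZR m - 1)).
  assert (Hs : 0 < s < 1) by (unfold s; lra).
  destruct (ab_idx_decomp N m N_pos) as [_ Hb]. set (b := b_idx N m) in *.
  apply (is_derive_ext_loc (fun u => piece m (/ Delta * u + - (IZR m - 1)) i)).
  { apply locally_interval with ((IZR m - 1) * Delta) (IZR m * Delta); simpl.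
    - apply Rlt_div_r; lra.
    - apply Rlt_div_l; lra.
    - intros u Hu1 Hu2. rewrite (phi_of_q_piece u m); [f_equal; field; lra|exact Hi|].
      split; [apply Rle_div_r|apply Rle_div_l]; lra. }
  replace (dde_rhs d h n Delta A phi t i) with
    (Cmult (czpow mu (a_idx N m))
       (Cmult (RtoC (/ Delta)) (Amat_app d N h n Delta A s mu (q s) b i))).
  - unfold phi_piece. apply is_derive_Cmult_l.
    apply (is_derive_comp_affine (fun r => q r b i) (/ Delta) (- (IZR m - 1))).
    replace (/ Delta * t + - (IZR m - 1)) with s by (unfold s; field; lra).
    now apply Hqd.
  - assert (Hb1 : 1 <= INR b) by (apply (le_INR 1); lia).
    assert (Hsb : 0 <= (s + INR b - 1) * Delta) by (apply Rmult_le_pos; lra).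
    assert (Et : (s + INR b - 1) * Delta + IZR (a_idx N m) * (INR N * Delta) = t).
    { unfold s. rewrite (ab_idx_decomp_R N m N_pos). fold b. field. lra. }
    rewrite (Amat_app_blocks phi (q s) s b i phi_of_q_quasi_periodic);
      [|intros; apply phi_of_q_blocks; auto; lra|lra|lia].
    assert (Hcancel : forall z, Cmult (RtoC (/ Delta)) (Cmult (RtoC Delta) z) = z).
    { intros [z1 z2]. unfold Cmult, RtoC; simpl. f_equal; field; lra. }
    rewrite Hcancel.
    rewrite <- (dde_rhs_quasi_periodic phi (a_idx N m) _ i phi_of_q_quasi_periodic Hi Hsb) by lra.
    now rewrite Et.
Qed.

Lemma phi_of_q_dde_sol_off_grid : dde_sol_off_grid d h n Delta A phi.
Proof.
  split.
  - intros i Hi t _. apply filterlim_locally_within, phi_of_q_continuous, Hi.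
  - intros i Hi t Ht Hgrid. now apply phi_of_q_derive.
Qed.

Lemma charmat_kernel_monodromy_eig :
  in_X d (INR (n h) * Delta) phi /\
  (forall x, dde_sol d h n Delta A phi x -> monodromy_eig d N h n Delta mu phi x).
Proof.
  split.
  - intros i Hi t _. apply filterlim_locally_within, phi_of_q_continuous, Hi.
  - intros x Hx i Hi theta Htheta. pose proof period_ge0.
    rewrite (dde_sol_off_grid_unique x phi (dde_sol_off_grid_of_dde_sol phi x Hx)
      phi_of_q_dde_sol_off_grid (proj1 Hx)) by (auto; lra).
    now apply phi_of_q_quasi_periodic.
Qed.

End Eigenvector.
End Periodic.
End DelayEquation.

Lemma n_le_last h (n : nat -> nat) : n 0%nat = 0%nat ->
  (forall j, (1 <= j)%nat -> (j < h)%nat -> (n j < n (S j))%nat) ->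
  forall j, (j <= h)%nat -> (n j <= n h)%nat.
Proof.
  intros Hn0 Hinc j Hj. destruct j as [|j]; [lia|].
  assert (Hmono : forall k, (S j + k <= h)%nat -> (n (S j) <= n (S j + k))%nat).
  { induction k as [|k IHk]; intros Hk; [rewrite Nat.add_0_r; lia|].
    rewrite Nat.add_succ_r. specialize (Hinc (S j + k)%nat ltac:(lia) ltac:(lia)).
    specialize (IHk ltac:(lia)). lia. }
  specialize (Hmono (h - S j)%nat ltac:(lia)).
  now replace (S j + (h - S j))%nat with h in Hmono by lia.
Qed.

Lemma smooth_continuity_pt f : smooth f -> forall t, continuity_pt f t.
Proof.
  intros Hf t. apply continuity_pt_filterlim. apply (ex_derive_continuous f t). exact (Hf 1%nat t).
Qed.

Theorem theorem2p2
  (d N h : nat) (n : nat -> nat) (Delta : R) (A : nat -> R -> nat -> nat -> R)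
  (HDelta : 0 < Delta) (HN : (0 < N)%nat)
  (Hn0 : n 0%nat = 0%nat)
  (Hninc : forall j, (1 <= j)%nat -> (j < h)%nat -> (n j < n (S j))%nat)
  (Hsmooth : forall j i k, (j <= h)%nat -> (i < d)%nat -> (k < d)%nat ->
               smooth (fun t => A j t i k))
  (Hper : forall j i k t, (j <= h)%nat -> (i < d)%nat -> (k < d)%nat ->
               A j (t + INR N * Delta) i k = A j t i k)
  (mu : C) (Hmu : mu <> RtoC 0) :
  (forall (phi : R -> nat -> C),
     in_X d (INR (n h) * Delta) phi ->
     nonzero_X d (INR (n h) * Delta) phi ->
     forall x : R -> nat -> C,
       dde_sol d h n Delta A phi x ->
       monodromy_eig d N h n Delta mu phi x ->
       charmat_kernel d N h n Delta A mu (fun nb i => x ((INR nb - 1) * Delta) i))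
  /\
  (forall (v : nat -> nat -> C),
     nonzero_vec d N v ->
     forall q : R -> nat -> nat -> C,
       ode_sol d N h n Delta A mu v q ->
       (forall nb i, (1 <= nb <= N)%nat -> (i < d)%nat -> q 1 nb i = Bmat_app N mu v nb i) ->
       in_X d (INR (n h) * Delta) (phi_of_q N Delta mu q) /\
       (forall x : R -> nat -> C,
          dde_sol d h n Delta A (phi_of_q N Delta mu q) x ->
          monodromy_eig d N h n Delta mu (phi_of_q N Delta mu q) x)).
Proof.
  pose proof (n_le_last h n Hn0 Hninc) as n_le.
  assert (A_cont : forall j i k t, (j <= h)%nat -> (i < d)%nat -> (k < d)%nat ->
            continuity_pt (fun t => A j t i k) t)
    by (intros j i k t Hj Hi Hk; now apply smooth_continuity_pt, Hsmooth).
  split.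
  - intros phi _ _ x Hx Hmon.
    exact (monodromy_eig_charmat_kernel d h n Delta A HDelta n_le A_cont N mu HN Hmu Hper
      phi x Hx Hmon).
  - intros v _ q Hq Hjump.
    exact (charmat_kernel_monodromy_eig d h n Delta A HDelta n_le A_cont N mu HN Hmu Hper
      v q Hq Hjump).
Qed.
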